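(* Every connected $D$-regular graph $G=(V,E)$ which is curvature sharp at all vertices has constant Bakry-\'Emery curvature, i.e. there is $\mathcal K\in\mathbb R$ with $\mathcal K_\infty(x)=\mathcal K$ for all $x\in V$.
   Context: For $f:V\to\mathbb R$, $\Delta f(x)=\sum_{y\sim x}(f(y)-f(x))$, $2\Gamma(f,g)=\Delta(fg)-f\Delta g-g\Delta f$, $2\Gamma_2(f,g)=\Delta\Gamma(f,g)-\Gamma(f,\Delta g)-\Gamma(g,\Delta f)$. The Bakry-\'Emery curvature $\mathcal K_\infty(x)$ is the supremum of all $K\in\mathbb R$ with $\Gamma_2(f,f)(x)\ge K\Gamma(f,f)(x)$ for all $f$. For a $D$-regular graph, $\mathcal K_\infty(x)\le 2+\#_\Delta(x)/D$ where $\#_\Delta(x)$ is the number of triangles containing $x$; $x$ is curvature sharp if equality holds. *)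

From Stdlib Require Import Reals List Relations ClassicalDescription.
Open Scope R_scope.

(* A simple graph on an arbitrary (possibly infinite) vertex type V is given by
   its neighbour lists [nbr x]; this forces local finiteness. *)
Definition simple_graph {V : Type} (nbr : V -> list V) : Prop :=
  (forall x, NoDup (nbr x)) /\
  (forall x, ~ In x (nbr x)) /\
  (forall x y, In y (nbr x) <-> In x (nbr y)).

Definition adj {V : Type} (nbr : V -> list V) (x y : V) : Prop := In y (nbr x).

Definition regular {V : Type} (nbr : V -> list V) (D : nat) : Prop :=
  forall x, length (nbr x) = D.

Definition connected {V : Type} (nbr : V -> list V) : Prop :=
  forall x y, clos_refl_trans V (adj nbr) x y.

Definition lsum {V : Type} (l : list V) (g : V -> R) : R :=
  fold_right (fun y acc => g y + acc) 0 l.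

Definition Lap {V : Type} (nbr : V -> list V) (f : V -> R) (x : V) : R :=
  lsum (nbr x) (fun y => f y - f x).

Definition Gamma {V : Type} (nbr : V -> list V) (f g : V -> R) (x : V) : R :=
  / 2 * (Lap nbr (fun z => f z * g z) x - f x * Lap nbr g x - g x * Lap nbr f x).

Definition Gamma2 {V : Type} (nbr : V -> list V) (f g : V -> R) (x : V) : R :=
  / 2 * (Lap nbr (Gamma nbr f g) x
         - Gamma nbr f (Lap nbr g) x - Gamma nbr g (Lap nbr f) x).

Definition BE_curvature {V : Type} (nbr : V -> list V) (x : V) (K : R) : Prop :=
  is_lub (fun K' => forall f : V -> R, Gamma2 nbr f f x >= K' * Gamma nbr f f x) K.

(* number of triangles containing x: ordered pairs (y,z) of neighbours of x
   with y ~ z, divided by 2 *)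
Definition triangles {V : Type} (nbr : V -> list V) (x : V) : R :=
  / 2 * lsum (nbr x) (fun y => lsum (nbr x) (fun z =>
          if excluded_middle_informative (In z (nbr y)) then 1 else 0)).

Definition curvature_sharp {V : Type} (nbr : V -> list V) (D : nat) (x : V) : Prop :=
  BE_curvature nbr x (2 + triangles nbr x / INR D).

From Stdlib Require Import Reals List Lra Lia ClassicalDescription Classical.
Open Scope R_scope.

(* Fix a vertex x of a D-regular graph, let m(x,y) be the number of common
   neighbours of x and y and S(x) = sum_{y~x} m(x,y) = 2 #triangles(x), so that
   the sharp curvature value is K = 2 + S(x)/(2D).  For the capped distance
   d_x (0 at x, 1 on the neighbours, 2 elsewhere) one computes
   Gamma2(d_x,d_x)(x) = D + S(x)/4 = K Gamma(d_x,d_x)(x): d_x attains equality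
   in the curvature-dimension inequality.  Since the inequality also holds for
   every perturbation d_x + t delta_y, its first variation in t vanishes, i.e.
   Gamma2(d_x,delta_y)(x) = K Gamma(d_x,delta_y)(x), which reads
   1 + m(x,y)/4 = K/2, that is D m(x,y) = S(x) for every neighbour y of x.
   As m is symmetric, S(x) = D m(x,y) = D m(y,x) = S(y) along each edge, so on
   a connected graph the number of triangles, hence the sharp curvature, is
   constant. *)

Definition indicator (P : Prop) : R := if excluded_middle_informative P then 1 else 0.

Lemma indicator_true (P : Prop) : P -> indicator P = 1.
Proof. intro H; unfold indicator; destruct (excluded_middle_informative P); tauto. Qed.

Lemma indicator_false (P : Prop) : ~ P -> indicator P = 0.
Proof. intro H; unfold indicator; destruct (excluded_middle_informative P); tauto. Qed.

Lemma indicator_iff (P Q : Prop) : (P <-> Q) -> indicator P = indicator Q.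
Proof.
 intro E; destruct (classic P) as [HP | HnP].
 - rewrite !indicator_true; tauto.
 - rewrite !indicator_false; tauto.
Qed.

Lemma lsum_ext {V : Type} (l : list V) (F G : V -> R) :
  (forall y, In y l -> F y = G y) -> lsum l F = lsum l G.
Proof. induction l; simpl; intros H; auto. rewrite H by auto. rewrite IHl; auto. Qed.

Lemma lsum_add {V : Type} (l : list V) (F G : V -> R) :
  lsum l (fun w => F w + G w) = lsum l F + lsum l G.
Proof. induction l as [|u l IHl]; simpl; [ring | rewrite IHl; ring]. Qed.

Lemma lsum_sub {V : Type} (l : list V) (F G : V -> R) :
  lsum l (fun w => F w - G w) = lsum l F - lsum l G.
Proof. induction l as [|u l IHl]; simpl; [ring | rewrite IHl; ring]. Qed.

Lemma lsum_scal {V : Type} (l : list V) (c : R) (F : V -> R) :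
  lsum l (fun w => c * F w) = c * lsum l F.
Proof. induction l as [|u l IHl]; simpl; [ring | rewrite IHl; ring]. Qed.

Lemma lsum_const {V : Type} (l : list V) (c : R) : lsum l (fun _ => c) = INR (length l) * c.
Proof.
 induction l as [|u l IHl]; simpl lsum; [simpl; ring|].
 rewrite IHl; simpl length; rewrite S_INR; ring.
Qed.

Lemma lsum_nonneg {V : Type} (l : list V) (F : V -> R) : (forall y, 0 <= F y) -> 0 <= lsum l F.
Proof. intro H; induction l as [|u l IHl]; simpl; [lra|]. specialize (H u); lra. Qed.

Lemma lsum_bilinear {V : Type} (l : list V) (a b c d : V -> R) (t s : R) :
  lsum l (fun w => (a w + t * b w) * (c w + s * d w)) =
  lsum l (fun w => a w * c w) + s * lsum l (fun w => a w * d w)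
  + t * lsum l (fun w => b w * c w) + t * s * lsum l (fun w => b w * d w).
Proof. induction l as [|u l IHl]; simpl; [ring | rewrite IHl; ring]. Qed.

Lemma lsum_swap {V W : Type} (l1 : list V) (l2 : list W) (F : V -> W -> R) :
  lsum l1 (fun a => lsum l2 (fun b => F a b)) = lsum l2 (fun b => lsum l1 (fun a => F a b)).
Proof.
 induction l1; simpl.
 - induction l2; simpl; auto. rewrite <- IHl2; ring.
 - rewrite IHl1, <- lsum_add. auto.
Qed.

Lemma lsum_pick {V : Type} (l : list V) (z : V) (h : V -> R) : NoDup l ->
  lsum l (fun w => indicator (w = z) * h w) = indicator (In z l) * h z.
Proof.
 induction l as [|a l IHl]; simpl; intros Hnd.
 - rewrite indicator_false; auto; ring.
 - inversion Hnd; subst. rewrite IHl by auto.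
   destruct (classic (a = z)) as [-> | Haz].
   + rewrite (indicator_false (In z l)), !indicator_true by auto. ring.
   + rewrite (indicator_false (a = z)) by auto.
     rewrite (indicator_iff (a = z \/ In z l) (In z l)) by tauto. ring.
Qed.

Lemma lsum_count {V : Type} (l : list V) (z : V) : NoDup l ->
  lsum l (fun w => indicator (w = z)) = indicator (In z l).
Proof.
 intro H. rewrite <- (Rmult_1_r (indicator (In z l))), <- (lsum_pick l z (fun _ => 1)) by auto.
 apply lsum_ext; intros; ring.
Qed.

Lemma lsum_intersection_sym {V : Type} (l1 l2 : list V) : NoDup l1 -> NoDup l2 ->
  lsum l1 (fun z => indicator (In z l2)) = lsum l2 (fun z => indicator (In z l1)).
Proof.
 intros H1 H2.
 transitivity (lsum l1 (fun z => lsum l2 (fun w => indicator (w = z)))).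
 { apply lsum_ext; intros; rewrite lsum_count; auto. }
 rewrite lsum_swap. apply lsum_ext; intros.
 rewrite <- lsum_count by auto. apply lsum_ext; intros; apply indicator_iff; split; auto.
Qed.

Section CarreDuChamp.
Context {V : Type} (nbr : V -> list V).

Lemma Gamma_as_sum (f g : V -> R) (v : V) :
  Gamma nbr f g v = / 2 * lsum (nbr v) (fun w => (f w - f v) * (g w - g v)).
Proof. unfold Gamma, Lap. f_equal. induction (nbr v); simpl; [ring | rewrite <- IHl; ring]. Qed.

Lemma Lap_ext (h1 h2 : V -> R) (v : V) :
  (forall w, h1 w = h2 w) -> Lap nbr h1 v = Lap nbr h2 v.
Proof. intro H; unfold Lap; apply lsum_ext; intros; rewrite !H; auto. Qed.

Lemma Gamma_ext (f1 f2 g1 g2 : V -> R) (v : V) :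
  (forall w, f1 w = f2 w) -> (forall w, g1 w = g2 w) ->
  Gamma nbr f1 g1 v = Gamma nbr f2 g2 v.
Proof. intros H1 H2; rewrite !Gamma_as_sum; f_equal; apply lsum_ext; intros; rewrite !H1, !H2; auto. Qed.

Lemma Gamma_sym (f g : V -> R) (v : V) : Gamma nbr f g v = Gamma nbr g f v.
Proof. rewrite !Gamma_as_sum; f_equal; apply lsum_ext; intros; ring. Qed.

Lemma Gamma_nonneg (f : V -> R) (v : V) : 0 <= Gamma nbr f f v.
Proof.
 rewrite Gamma_as_sum. apply Rmult_le_pos; [lra|].
 apply lsum_nonneg; intros; apply Rle_0_sqr.
Qed.

Lemma Lap_linear (f g : V -> R) (t : R) (v : V) :
  Lap nbr (fun z => f z + t * g z) v = Lap nbr f v + t * Lap nbr g v.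
Proof.
 unfold Lap. rewrite (lsum_ext _ _ (fun w => (f w - f v) + t * (g w - g v))) by (intros; ring).
 rewrite lsum_add, lsum_scal. auto.
Qed.

Lemma Gamma_bilinear (f1 g1 f2 g2 : V -> R) (t s : R) (v : V) :
  Gamma nbr (fun z => f1 z + t * g1 z) (fun z => f2 z + s * g2 z) v =
  Gamma nbr f1 f2 v + s * Gamma nbr f1 g2 v + t * Gamma nbr g1 f2 v
  + t * s * Gamma nbr g1 g2 v.
Proof.
 rewrite !Gamma_as_sum.
 rewrite (lsum_ext _ _ (fun w => ((f1 w - f1 v) + t * (g1 w - g1 v))
                                 * ((f2 w - f2 v) + s * (g2 w - g2 v)))) by (intros; ring).
 rewrite lsum_bilinear. ring.
Qed.

Lemma Gamma2_quadratic (f g : V -> R) (t : R) (x : V) :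
  Gamma2 nbr (fun z => f z + t * g z) (fun z => f z + t * g z) x =
  Gamma2 nbr f f x + 2 * t * Gamma2 nbr f g x + t * t * Gamma2 nbr g g x.
Proof.
 unfold Gamma2.
 rewrite (Lap_ext _ (fun v => (Gamma nbr f f v + t * (Gamma nbr f g v + 1 * Gamma nbr g f v))
                              + (t * t) * Gamma nbr g g v))
   by (intros; rewrite Gamma_bilinear; ring).
 rewrite !Lap_linear.
 rewrite (Lap_ext (Gamma nbr g f) (Gamma nbr f g)) by (intros; apply Gamma_sym).
 rewrite (Gamma_ext _ (fun z => f z + t * g z) _ (fun z => Lap nbr f z + t * Lap nbr g z))
   by (intros; auto; apply Lap_linear).
 rewrite Gamma_bilinear. ring.
Qed.
End CarreDuChamp.

Section CurvatureBound.
Context {V : Type} (nbr : V -> list V).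

(* The supremum defining the Bakry-Emery curvature is attained: since
   Gamma(f,f) >= 0, the set of admissible K' is closed. *)
Lemma BE_curvature_attained (x : V) (K : R) : BE_curvature nbr x K ->
  forall f, Gamma2 nbr f f x >= K * Gamma nbr f f x.
Proof.
 intros [_ Hleast] f.
 destruct (Rlt_or_le (Gamma2 nbr f f x) (K * Gamma nbr f f x)) as [Hlt|]; [exfalso | lra].
 destruct (Rle_lt_or_eq_dec _ _ (Gamma_nonneg nbr f x)) as [Hpos | Hzero].
 - assert (Hle : K <= Gamma2 nbr f f x / Gamma nbr f f x).
   { apply Hleast. intros K' HK'. specialize (HK' f).
     apply (Rmult_le_reg_r (Gamma nbr f f x)); auto.
     unfold Rdiv. rewrite Rmult_assoc, Rinv_l by lra. lra. }
   apply (Rmult_le_compat_r (Gamma nbr f f x)) in Hle; [|lra].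
   unfold Rdiv in Hle. rewrite Rmult_assoc, Rinv_l in Hle by lra. lra.
 - assert (K <= K - 1).
   { apply Hleast. intros K' HK'. specialize (HK' f). rewrite <- Hzero in *. lra. }
   lra.
Qed.

Lemma nonneg_quadratic_no_linear_term (b c : R) :
  (forall t, b * t + c * t * t >= 0) -> b = 0.
Proof.
 intro H. destruct (Req_dec b 0) as [|Hb]; auto. exfalso.
 set (k := 2 * (Rabs c + 1)).
 assert (Hk : k > 0) by (unfold k; pose proof (Rabs_pos c); lra).
 specialize (H (- b / k)).
 replace (b * (- b / k) + c * (- b / k) * (- b / k)) with ((b * b) / (k * k) * (c - k)) in H
   by (field; lra).
 assert (0 < b * b / (k * k)).
 { unfold Rdiv. apply Rmult_lt_0_compat; [nra | apply Rinv_0_lt_compat; nra]. }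
 assert (c - k < 0) by (unfold k; pose proof (Rle_abs c); pose proof (Rabs_pos c); lra).
 nra.
Qed.

Lemma CD_equality_first_variation (x : V) (K : R) (f g : V -> R) :
  (forall h, Gamma2 nbr h h x >= K * Gamma nbr h h x) ->
  Gamma2 nbr f f x = K * Gamma nbr f f x ->
  Gamma2 nbr f g x = K * Gamma nbr f g x.
Proof.
 intros HCD Heq.
 assert (Hlin : 2 * (Gamma2 nbr f g x - K * Gamma nbr f g x) = 0).
 { apply nonneg_quadratic_no_linear_term
     with (c := Gamma2 nbr g g x - K * Gamma nbr g g x).
   intro t. specialize (HCD (fun z => f z + t * g z)).
   rewrite Gamma2_quadratic, Gamma_bilinear, (Gamma_sym _ g f) in HCD.
   nra. }
 lra.
Qed.
End CurvatureBound.

Section SharpVertex.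
Context {V : Type} (nbr : V -> list V) (D : nat).
Hypothesis Hsimple : simple_graph nbr.
Hypothesis Hregular : regular nbr D.

Lemma nbr_nodup (v : V) : NoDup (nbr v). Proof. apply Hsimple. Qed.
Lemma nbr_irrefl (v : V) : ~ In v (nbr v). Proof. apply Hsimple. Qed.
Lemma nbr_sym (v w : V) : In w (nbr v) -> In v (nbr w). Proof. apply Hsimple. Qed.
Lemma nbr_length (v : V) : INR (length (nbr v)) = INR D. Proof. rewrite Hregular; auto. Qed.

Lemma nbr_neq (x y : V) : In y (nbr x) -> y <> x.
Proof. intros H ->. exact (nbr_irrefl _ H). Qed.

Definition capped_dist (x v : V) : R :=
  if excluded_middle_informative (v = x) then 0
  else if excluded_middle_informative (In v (nbr x)) then 1 else 2.

Definition delta (y v : V) : R := indicator (v = y).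

Definition common (x y : V) : R := lsum (nbr y) (fun z => indicator (In z (nbr x))).

Definition common_sum (x : V) : R := lsum (nbr x) (fun y => common x y).

Lemma common_sym (x y : V) : common x y = common y x.
Proof. apply lsum_intersection_sym; apply nbr_nodup. Qed.

Lemma triangles_common_sum (x : V) : triangles nbr x = common_sum x / 2.
Proof.
 unfold triangles, common_sum, Rdiv. rewrite Rmult_comm. f_equal.
 apply lsum_ext; intros y Hy.
 exact (lsum_intersection_sym (nbr x) (nbr y) (nbr_nodup x) (nbr_nodup y)).
Qed.

Lemma capped_dist_center (x : V) : capped_dist x x = 0.
Proof. unfold capped_dist; destruct (excluded_middle_informative (x = x)); tauto. Qed.

Lemma capped_dist_nbr (x y : V) : In y (nbr x) -> capped_dist x y = 1.
Proof.
 intro H. unfold capped_dist.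
 destruct (excluded_middle_informative (y = x)) as [E|]; [exact (False_ind _ (nbr_neq x y H E))|].
 destruct (excluded_middle_informative (In y (nbr x))); tauto.
Qed.

Lemma capped_dist_pred (x z : V) :
  capped_dist x z - 1 = 1 - indicator (In z (nbr x)) - 2 * indicator (z = x).
Proof.
 unfold capped_dist. destruct (excluded_middle_informative (z = x)) as [->|Hzx].
 - rewrite indicator_false by apply nbr_irrefl. rewrite indicator_true; auto; ring.
 - rewrite (indicator_false (z = x)) by auto.
   destruct (excluded_middle_informative (In z (nbr x))).
   + rewrite indicator_true; auto; ring.
   + rewrite indicator_false; auto; ring.
Qed.

Lemma capped_dist_pred_sq (x z : V) :
  (capped_dist x z - 1) * (capped_dist x z - 1) = 1 - indicator (In z (nbr x)).
Proof.
 unfold capped_dist. destruct (excluded_middle_informative (z = x)) as [->|].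
 - rewrite indicator_false by apply nbr_irrefl. ring.
 - destruct (excluded_middle_informative (In z (nbr x))).
   + rewrite indicator_true; auto; ring.
   + rewrite indicator_false; auto; ring.
Qed.

Lemma Lap_capped_dist_center (x : V) : Lap nbr (capped_dist x) x = INR D.
Proof.
 unfold Lap. rewrite capped_dist_center.
 rewrite (lsum_ext _ _ (fun z => 1)) by (intros; rewrite capped_dist_nbr; auto; ring).
 rewrite lsum_const, nbr_length. ring.
Qed.

Lemma Lap_capped_dist_nbr (x y : V) : In y (nbr x) ->
  Lap nbr (capped_dist x) y = INR D - common x y - 2.
Proof.
 intro H. unfold Lap. rewrite (capped_dist_nbr x y H).
 rewrite (lsum_ext _ _ (fun z => 1 - indicator (In z (nbr x)) - 2 * indicator (z = x)))
   by (intros; apply capped_dist_pred).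
 rewrite !lsum_sub, lsum_const, lsum_scal, lsum_count by apply nbr_nodup.
 rewrite indicator_true by (apply nbr_sym; auto). rewrite nbr_length. unfold common. ring.
Qed.

Lemma Gamma_capped_dist_center (x : V) : Gamma nbr (capped_dist x) (capped_dist x) x = INR D / 2.
Proof.
 rewrite Gamma_as_sum, capped_dist_center.
 rewrite (lsum_ext _ _ (fun z => 1)) by (intros; rewrite capped_dist_nbr; auto; ring).
 rewrite lsum_const, nbr_length. field.
Qed.

Lemma Gamma_capped_dist_nbr (x y : V) : In y (nbr x) ->
  Gamma nbr (capped_dist x) (capped_dist x) y = / 2 * (INR D - common x y).
Proof.
 intro H. rewrite Gamma_as_sum, (capped_dist_nbr x y H). f_equal.
 rewrite (lsum_ext _ _ (fun z => 1 - indicator (In z (nbr x)))) by (intros; apply capped_dist_pred_sq).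
 rewrite lsum_sub, lsum_const, nbr_length. unfold common; ring.
Qed.

Lemma Gamma2_capped_dist (x : V) :
  Gamma2 nbr (capped_dist x) (capped_dist x) x = common_sum x / 4 + INR D.
Proof.
 assert (HLapGamma : Lap nbr (Gamma nbr (capped_dist x) (capped_dist x)) x = - / 2 * common_sum x).
 { unfold Lap. rewrite Gamma_capped_dist_center.
   rewrite (lsum_ext _ _ (fun y => - / 2 * common x y))
     by (intros; rewrite Gamma_capped_dist_nbr; auto; field).
   rewrite lsum_scal; auto. }
 assert (HGammaLap : Gamma nbr (capped_dist x) (Lap nbr (capped_dist x)) x
                     = / 2 * (- common_sum x - 2 * INR D)).
 { rewrite Gamma_as_sum, capped_dist_center, Lap_capped_dist_center. f_equal.
   rewrite (lsum_ext _ _ (fun y => -1 * common x y - 2))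
     by (intros; rewrite capped_dist_nbr, Lap_capped_dist_nbr; auto; ring).
   rewrite lsum_sub, lsum_const, lsum_scal, nbr_length. unfold common_sum; change (fun y => common x y) with (common x); ring. }
 unfold Gamma2. rewrite HLapGamma, HGammaLap. field.
Qed.

Lemma Lap_delta_center (x y : V) : In y (nbr x) -> Lap nbr (delta y) x = 1.
Proof.
 intro H. unfold Lap, delta.
 rewrite (indicator_false (x = y)) by (intro E; apply (nbr_neq x y H); auto).
 rewrite (lsum_ext _ _ (fun w => indicator (w = y))) by (intros; ring).
 rewrite lsum_count by apply nbr_nodup. apply indicator_true; auto.
Qed.

Lemma Lap_delta_nbr (x y w : V) : In w (nbr x) ->
  Lap nbr (delta y) w = indicator (In y (nbr w)) - INR D * indicator (w = y).
Proof.
 intro H. unfold Lap, delta. rewrite lsum_sub, lsum_count by apply nbr_nodup.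
 rewrite lsum_const, nbr_length. auto.
Qed.

Lemma Gamma_capped_dist_delta_center (x y : V) : In y (nbr x) ->
  Gamma nbr (capped_dist x) (delta y) x = / 2.
Proof.
 intro H. rewrite Gamma_as_sum, capped_dist_center. unfold delta at 2.
 rewrite (indicator_false (x = y)) by (intro E; apply (nbr_neq x y H); auto).
 rewrite (lsum_ext _ _ (fun w => indicator (w = y)))
   by (intros; rewrite capped_dist_nbr; auto; unfold delta; ring).
 rewrite lsum_count by apply nbr_nodup. rewrite indicator_true; auto; ring.
Qed.

Lemma Gamma_capped_dist_delta_nbr (x y w : V) : In y (nbr x) -> In w (nbr x) ->
  Gamma nbr (capped_dist x) (delta y) w = indicator (w = y) * (- / 2 * (INR D - common x w - 2)).
Proof.
 intros Hy Hw. rewrite Gamma_as_sum, (capped_dist_nbr x w Hw). unfold delta at 2.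
 destruct (classic (w = y)) as [->|Hwy].
 - rewrite (indicator_true (y = y)) by auto.
   rewrite (lsum_ext _ _ (fun z => -1 * (capped_dist x z - capped_dist x y))).
   2:{ intros z Hz. unfold delta. rewrite indicator_false, (capped_dist_nbr x y Hy).
       ring. intros ->; exact (nbr_irrefl _ Hz). }
   rewrite lsum_scal, <- (Lap_capped_dist_nbr x y Hy). unfold Lap.
   rewrite (capped_dist_nbr x y Hy). ring.
 - rewrite (indicator_false (w = y)) by auto.
   rewrite (lsum_ext _ _ (fun z => 0)).
   2:{ intros z Hz. unfold delta. destruct (classic (z = y)) as [->|].
       + rewrite capped_dist_nbr; auto; ring.
       + rewrite indicator_false; auto; ring. }
   rewrite lsum_const. ring.
Qed.

Lemma Gamma2_capped_dist_delta (x y : V) : In y (nbr x) ->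
  Gamma2 nbr (capped_dist x) (delta y) x = 1 + common x y / 4.
Proof.
 intro Hy.
 assert (HLapGamma : Lap nbr (Gamma nbr (capped_dist x) (delta y)) x
                     = - / 2 * (INR D - common x y - 2) - INR D / 2).
 { unfold Lap. rewrite Gamma_capped_dist_delta_center by auto.
   rewrite (lsum_ext _ _ (fun w => indicator (w = y) * (- / 2 * (INR D - common x w - 2)) - / 2))
     by (intros; rewrite Gamma_capped_dist_delta_nbr; auto).
   rewrite lsum_sub, lsum_const, nbr_length.
   rewrite (lsum_pick _ _ (fun w => - / 2 * (INR D - common x w - 2))) by apply nbr_nodup.
   rewrite indicator_true by auto. field. }
 assert (HGammaLapDelta : Gamma nbr (capped_dist x) (Lap nbr (delta y)) x
                          = / 2 * (common x y - 2 * INR D)).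
 { rewrite Gamma_as_sum, capped_dist_center, Lap_delta_center by auto. f_equal.
   rewrite (lsum_ext _ _ (fun w => indicator (In w (nbr y)) - INR D * indicator (w = y) - 1)).
   2:{ intros w Hw. rewrite (capped_dist_nbr x w Hw), (Lap_delta_nbr x y w Hw).
       rewrite (indicator_iff (In y (nbr w)) (In w (nbr y))) by (split; apply nbr_sym).
       ring. }
   rewrite !lsum_sub, lsum_scal, lsum_count, lsum_const, nbr_length by apply nbr_nodup.
   rewrite (indicator_true (In y (nbr x))) by auto.
   unfold common. rewrite lsum_intersection_sym by apply nbr_nodup. ring. }
 assert (HGammaLapDist : Gamma nbr (delta y) (Lap nbr (capped_dist x)) x
                         = / 2 * (- common x y - 2)).
 { rewrite Gamma_as_sum, Lap_capped_dist_center. unfold delta at 2.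
   rewrite (indicator_false (x = y)) by (intro E; apply (nbr_neq x y Hy); auto). f_equal.
   rewrite (lsum_ext _ _ (fun w => indicator (w = y) * (- common x w - 2)))
     by (intros; unfold delta; rewrite Lap_capped_dist_nbr by auto; ring).
   rewrite lsum_pick by apply nbr_nodup. rewrite indicator_true; auto. ring. }
 unfold Gamma2. rewrite HLapGamma, HGammaLapDelta, HGammaLapDist. field.
Qed.

Lemma sharp_common_balanced (x y : V) :
  curvature_sharp nbr D x -> In y (nbr x) -> INR D * common x y = common_sum x.
Proof.
 intros Hsharp Hy.
 assert (HD : INR D > 0).
 { rewrite <- (Hregular x). apply lt_0_INR. destruct (nbr x); simpl in *; [tauto | lia]. }
 set (K := 2 + triangles nbr x / INR D) in *.
 assert (HK : K = 2 + common_sum x / (2 * INR D))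
   by (unfold K; rewrite triangles_common_sum; field; lra).
 pose proof (BE_curvature_attained nbr x K Hsharp) as HCD.
 assert (Hequality : Gamma2 nbr (capped_dist x) (capped_dist x) x
                     = K * Gamma nbr (capped_dist x) (capped_dist x) x).
 { rewrite Gamma2_capped_dist, Gamma_capped_dist_center, HK. field; lra. }
 pose proof (CD_equality_first_variation nbr x K _ (delta y) HCD Hequality) as Hvar.
 rewrite Gamma2_capped_dist_delta, Gamma_capped_dist_delta_center, HK in Hvar by auto.
 replace (common x y) with (4 * (1 + common x y / 4) - 4) by field.
 rewrite Hvar. field; lra.
Qed.

Lemma sharp_triangles_edge :
  (forall v, curvature_sharp nbr D v) ->
  forall x y, adj nbr x y -> triangles nbr x = triangles nbr y.
Proof.
 intros Hsharp x y Hxy.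
 rewrite !triangles_common_sum.
 rewrite <- (sharp_common_balanced x y (Hsharp x) Hxy),
         <- (sharp_common_balanced y x (Hsharp y) (nbr_sym x y Hxy)), common_sym.
 reflexivity.
Qed.
End SharpVertex.

Lemma connected_edge_invariant_const {V : Type} {A : Type} (nbr : V -> list V) (F : V -> A) :
  connected nbr -> (forall x y, adj nbr x y -> F x = F y) -> forall x y, F x = F y.
Proof.
 intros Hconn Hedge x y.
 induction (Hconn x y) as [a b Hab | a | a b c _ IHab _ IHbc]; auto. congruence.
Qed.

Theorem mainTheorem3 (V : Type) (nbr : V -> list V) (D : nat) :
  simple_graph nbr -> regular nbr D -> connected nbr ->
  (forall x, curvature_sharp nbr D x) ->
  exists K : R, forall x, BE_curvature nbr x K.
Proof.
 intros Hsimple Hregular Hconn Hsharp.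
 destruct (classic (exists x0 : V, True)) as [[x0 _] | Hempty].
 - exists (2 + triangles nbr x0 / INR D). intro x.
   rewrite (connected_edge_invariant_const nbr (triangles nbr) Hconn
              (sharp_triangles_edge nbr D Hsimple Hregular Hsharp) x0 x).
   apply Hsharp.
 - exists 0. intro x. exfalso. apply Hempty. exists x; auto.
Qed.
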